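(* Let $m\geq 1$ and $n>1$ be integers and let $G$ be an $r$-regular graph of order $m$. If $n\equiv 0\pmod 2$, or $mn\equiv 1\pmod 2$, or $G$ is distance magic, then $G\circ nK_1$ is distance magic.
   Context: A graph $G$ on $v$ vertices is distance magic if there is a bijection $f:V(G)\to\{1,\ldots,v\}$ and a constant $k$ such that for every vertex $x$, $\sum_{y\in N(x)}f(y)=k$, where $N(x)$ is the set of neighbours of $x$. $nK_1$ is the edgeless graph on $n$ vertices. The lexicographic product $G\circ H$ has vertex set $V(G)\times V(H)$, with $(g,h)$ adjacent to $(g',h')$ iff either $gg'\in E(G)$, or $g=g'$ and $hh'\in E(H)$. *)

From mathcomp Require Import all_boot.
Set Implicit Arguments. Unset Strict Implicit. Unset Printing Implicit Defensive.

Definition simple_graph (V : finType) (e : rel V) : Prop :=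
  symmetric e /\ irreflexive e.

Definition regular (V : finType) (e : rel V) (r : nat) : Prop :=
  forall x : V, #|[set y | e x y]| = r.

(* Distance magic: a bijection f : V -> {1,...,|V|} (an injective map into
   {1,..,|V|}, hence a bijection by cardinality) and a constant k with
   sum_{y in N(x)} f y = k for all x. *)
Definition distance_magic (V : finType) (e : rel V) : Prop :=
  exists f : V -> nat,
    (forall x, 1 <= f x <= #|V|) /\ injective f /\
    exists k : nat, forall x : V, \sum_(y | e x y) f y = k.

(* Lexicographic product G o nK_1: vertex set V x 'I_n, (g,h) ~ (g',h')
   iff g g' is an edge of G (nK_1 has no edges). *)
Definition lex_nK1 (V : finType) (e : rel V) (n : nat) : rel (V * 'I_n) :=
  fun u w => e u.1 w.1.
Arguments lex_nK1 V e n : clear implicits.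
Arguments lex_nK1 {V} e n.

(* Label the vertex (y, j) of G o nK_1 by j m + s_j(y) + 1, where each layer
   s_j is a bijection from V onto {0, ..., m-1}. By regularity the parts
   j m + 1 contribute the same amount to every neighbourhood sum, so the
   labelling is distance magic as soon as sum_{y in N(x)} sum_j s_j(y) does
   not depend on x. This holds when every layer is g - 1 for a distance magic
   labelling g of G, and when the layers have constant column sums
   sum_j s_j(y), i.e. form a Kotzig array. Kotzig arrays with n rows exist for
   n even (pairs of rows i and m-1-i) and for m, n odd (a 3-row array followed
   by such pairs). *)
From mathcomp Require Import all_boot zify.

Lemma mulnD_small_inj {d q q' t t'} :
  t < d -> t' < d -> q * d + t = q' * d + t' -> q = q' /\ t = t'.
Proof.
move=> ltd ltd' eq_qt; have d_gt0 : 0 < d by apply: leq_ltn_trans ltd.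
split.
- by have := congr1 (divn^~ d) eq_qt; rewrite /= !divnMDl // !divn_small // !addn0.
- by have := congr1 (modn^~ d) eq_qt; rewrite /= !modnMDl !modn_small.
Qed.

Definition kotzig_array (n m : nat) (a : 'I_n -> 'I_m -> nat) : Prop :=
  [/\ forall j, injective (a j), forall j i, a j i < m
    & exists c, forall i, \sum_j a j i = c].

Lemma kotzig_array0 m : kotzig_array 0 m (fun _ i => i).
Proof. by split=> [[]|[]|] //; exists 0 => i; rewrite big_ord0. Qed.

Lemma kotzig_array_pair m :
  kotzig_array 2 m (fun j i => if j == ord0 then i else rev_ord i).
Proof.
split=> [j|j i|]; first by case: eqP => _ i i' /val_inj // /rev_ord_inj.
  by case: eqP.
by exists m.-1 => i; rewrite !big_ord_recr big_ord0 /=; have := ltn_ord i; lia.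
Qed.

Lemma kotzig_array_cat n1 n2 m a b :
  kotzig_array n1 m a -> kotzig_array n2 m b ->
  kotzig_array (n1 + n2) m
    (fun j => match split j with inl j1 => a j1 | inr j2 => b j2 end).
Proof.
move=> [a_inj a_lt [ca suma]] [b_inj b_lt [cb sumb]].
split=> [j|j i|]; try by case: split.
exists (ca + cb) => i; rewrite big_split_ord -(suma i) -(sumb i).
by congr (_ + _); apply: eq_bigr => j _;
  [rewrite -[lshift _ _]/(unsplit (inl j)) | rewrite -[rshift _ _]/(unsplit (inr j))];
  rewrite unsplitK.
Qed.

Section KotzigTriple.

Context {m : nat}.
Hypothesis m_odd : odd m.
Let h := m./2.

Definition kotzig_shift (i : nat) : nat := if i <= h then i + h else i - h.+1.

Definition kotzig_triple (j : 'I_3) (i : 'I_m) : nat :=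
  match val j with
  | 0 => i
  | 1 => kotzig_shift i
  | _ => 3 * h - (i + kotzig_shift i)
  end.

(* Row 2 is 2h, 2h-2, ..., 0 on i <= h and 2h-1, 2h-3, ..., 1 on i > h. *)
Lemma kotzig_array_triple : kotzig_array 3 m kotzig_triple.
Proof.
have m_eq : m = h.*2.+1 by rewrite -[m in LHS]odd_double_half m_odd.
rewrite /kotzig_triple /kotzig_shift; split.
- move=> [[|[|[|j]]] //= _] i i' eq_row; apply: ord_inj; move: eq_row;
    by have := ltn_ord i; have := ltn_ord i'; case: (leqP i h); case: (leqP i' h); lia.
- move=> [[|[|[|j]]] //= _] i; have := ltn_ord i; case: (leqP i h); lia.
exists (3 * h) => i; rewrite !big_ord_recr big_ord0 /=.
by have := ltn_ord i; case: (leqP i h); lia.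
Qed.

End KotzigTriple.

Lemma kotzig_array_exists {n m} :
  n != 1 -> ~~ odd n || odd m -> exists a, kotzig_array n m a.
Proof.
move=> n_neq1 n_even_or_m_odd.
have kotzig_even k : exists a, kotzig_array k.*2 m a.
  elim: k => [|k [a kotzig_a]]; first by eexists; exact: kotzig_array0.
  rewrite doubleS -addn2 addnC.
  by eexists; exact: kotzig_array_cat (kotzig_array_pair m) kotzig_a.
have n_eq := odd_double_half n.
case: (boolP (odd n)) => n_odd in n_eq n_even_or_m_odd *; last first.
  by rewrite -n_eq; exact: kotzig_even.
have [a kotzig_a] := kotzig_even (n./2).-1.
have -> : n = 3 + (n./2).-1.*2 by move: n_neq1; rewrite -n_eq; lia.
by eexists; exact: kotzig_array_cat (kotzig_array_triple n_even_or_m_odd) kotzig_a.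
Qed.

Section LexProductNK1.

Variables (V : finType) (e : rel V) (n r : nat).
Hypothesis e_regular : regular e r.

Lemma sum_lex_nK1_nbhd (x : V * 'I_n) (F : V * 'I_n -> nat) :
  \sum_(p | lex_nK1 e n x p) F p = \sum_(y | e x.1 y) \sum_(j < n) F (y, j).
Proof.
rewrite (pair_big_dep (e x.1) (fun _ _ => true) (fun y j => F (y, j))) /=.
by apply: eq_big => -[y j] //; rewrite andbT.
Qed.

Lemma regular_sum_const x c : \sum_(y | e x y) c = r * c.
Proof. by rewrite sum_nat_const -(e_regular x) cardsE. Qed.

Lemma lex_nK1_magic_of_layers (s : 'I_n -> V -> nat) :
  (forall j, injective (s j)) -> (forall j y, s j y < #|V|) ->
  (exists c, forall x, \sum_(y | e x y) \sum_j s j y = c) ->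
  distance_magic (lex_nK1 e n).
Proof.
move=> s_inj s_lt [c sum_s].
exists (fun p : V * 'I_n => p.2 * #|V| + s p.2 p.1 + 1); split; [|split].
- move=> [y j] /=; rewrite card_prod card_ord.
  rewrite addn1 ltn0Sn [#|V| * n]mulnC (leq_trans _ (leq_mul (ltn_ord j) (leqnn _))) //.
  by rewrite mulSn addnC ltn_add2r.
- move=> [y j] [y' j'] /= /addIn eq_label.
  have [/ord_inj eq_j eq_s] := mulnD_small_inj (s_lt j y) (s_lt j' y') eq_label.
  by subst j'; rewrite (s_inj j _ _ eq_s).
exists (r * \sum_(j < n) (j * #|V| + 1) + c) => -[x i].
rewrite sum_lex_nK1_nbhd /= -(sum_s x) -(regular_sum_const x) -big_split /=.
by apply: eq_bigr => y _; rewrite -big_split /=; apply: eq_bigr => j _; lia.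
Qed.

Lemma lex_nK1_magic_of_kotzig a :
  kotzig_array n #|V| a -> distance_magic (lex_nK1 e n).
Proof.
move=> [a_inj a_lt [c sum_a]].
apply: (@lex_nK1_magic_of_layers (fun j y => a j (enum_rank y))).
- by move=> j y y' /a_inj /enum_rank_inj.
- by move=> j y; apply: a_lt.
by exists (r * c) => x; rewrite -(regular_sum_const x); apply: eq_bigr => y _; apply: sum_a.
Qed.

Lemma lex_nK1_magic_of_magic : distance_magic e -> distance_magic (lex_nK1 e n).
Proof.
move=> [g [g_range [g_inj [k sum_g]]]].
apply: (@lex_nK1_magic_of_layers (fun _ y => (g y).-1)).
- by move=> _ y y' eq_g; apply: g_inj; have := g_range y; have := g_range y'; lia.
- by move=> _ y; have := g_range y; lia.
exists (n * (k - r)) => x; rewrite -(sum_g x) -[r]muln1 -(regular_sum_const x).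
under eq_bigr do rewrite sum_nat_const card_ord.
rewrite -big_distrr /= -sumnB => [|y _]; last by case/andP: (g_range y).
by congr (_ * _); apply: eq_bigr => y _; rewrite subn1.
Qed.

End LexProductNK1.

Theorem theorem14 (V : finType) (e : rel V) (m n r : nat) :
  simple_graph e -> #|V| = m -> 1 <= m -> 1 < n -> regular e r ->
  (~~ odd n \/ odd (m * n) \/ distance_magic e) ->
  distance_magic (lex_nK1 e n).
Proof.
move=> _ card_V _ n_gt1 e_regular.
have n_neq1 : n != 1 by rewrite neq_ltn n_gt1 orbT.
have kotzig_magic : ~~ odd n || odd m -> distance_magic (lex_nK1 e n).
  rewrite -card_V => n_even_or_m_odd.
  have [a kotzig_a] := kotzig_array_exists n_neq1 n_even_or_m_odd.
  exact: lex_nK1_magic_of_kotzig kotzig_a.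
case=> [n_even | [mn_odd | e_magic]].
- by apply: kotzig_magic; rewrite n_even.
- by apply: kotzig_magic; move: mn_odd; rewrite oddM => /andP[-> _]; rewrite orbT.
- exact: lex_nK1_magic_of_magic.
Qed.
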